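(* Let $K$ be an $\mathcal R$-dioid (i.e., a $*$-continuous Kleene algebra). For each $\phi\in K\otimes_{\mathcal R}C_2'$ there are $n\in\mathbb N$, $S\in\{0,1\}^{1\times n}$, $F\in\{0,1\}^{n\times 1}$, $U\in\{0,b,p\}^{n\times n}$, $V\in\{0,d,q\}^{n\times n}$ and $X\in K^{n\times n}$ such that \[ \phi=S(U+X+V)^*F \] (computed in the matrix Kleene algebra over $K\otimes_{\mathcal R}C_2'$).
   Context: An $\mathcal R$-dioid is a dioid in which every regular subset of its multiplicative monoid has a supremum $\sum A$ with $\sum(AB)=(\sum A)(\sum B)$; equivalently a $*$-continuous Kleene algebra. An $\mathcal R$-congruence is a semiring congruence such that regular sets with equal downward closures modulo it have congruent suprema. $C_2'=\mathcal R\Delta_2^*/\rho$ where $\Delta_2=\{b,p,d,q\}$, $\mathcal R\Delta_2^*$ is the algebra of regular languages over $\Delta_2$, and $\rho$ is the least $\mathcal R$-congruence containing $bd=pq=1$, $bq=pd=0$. $K\otimes_{\mathcal R}C_2'$ is the tensor product of $\mathcal R$-dioids (universal $\mathcal R$-dioid with $\mathcal R$-morphisms from $K$ and $C_2'$ whose images commute elementwise); elements of $K$ and $C_2'$ are identified with their images. Matrices over a Kleene algebra form a Kleene algebra with matrix sum, product and the standard (block-recursive) matrix star. *)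

From Stdlib Require Import List.
Import ListNotations.
Set Implicit Arguments.

Inductive rexp (A : Type) : Type :=
| RZero | ROne | RAtom (a : A)
| RPlus (e f : rexp A) | RMul (e f : rexp A) | RStar (e : rexp A).
Arguments RZero {A}. Arguments ROne {A}.

(** Semantics of e as a subset of the monoid (A, mul, one):
    the regular subsets are exactly the sets [rsem mul one e]. *)
Fixpoint rsem {A : Type} (mul : A -> A -> A) (one : A) (e : rexp A) : A -> Prop :=
  match e with
  | RZero => fun _ => False
  | ROne => fun x => x = one
  | RAtom a => fun x => x = a
  | RPlus e f => fun x => rsem mul one e x \/ rsem mul one f x
  | RMul e f => fun x => exists y z, rsem mul one e y /\ rsem mul one f z /\ x = mul y z
  | RStar e => fun x => exists s : list A,
                  Forall (rsem mul one e) s /\ x = fold_right mul one s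
  end.

(** Image of a regular expression under a map (image of the regular set
    under a monoid morphism). *)
Fixpoint rmap {A B : Type} (f : A -> B) (e : rexp A) : rexp B :=
  match e with
  | RZero => RZero | ROne => ROne | RAtom a => RAtom (f a)
  | RPlus e1 e2 => RPlus (rmap f e1) (rmap f e2)
  | RMul e1 e2 => RMul (rmap f e1) (rmap f e2)
  | RStar e1 => RStar (rmap f e1)
  end.

Record rdioid := RDioid {
  dcar :> Type;
  dadd : dcar -> dcar -> dcar;
  dmul : dcar -> dcar -> dcar;
  dzero : dcar;
  done : dcar;
  dsup : rexp dcar -> dcar;
  daddA : forall x y z, dadd x (dadd y z) = dadd (dadd x y) z;
  daddC : forall x y, dadd x y = dadd y x;
  dadd0 : forall x, dadd dzero x = x;
  daddI : forall x, dadd x x = x;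
  dmulA : forall x y z, dmul x (dmul y z) = dmul (dmul x y) z;
  dmul1l : forall x, dmul done x = x;
  dmul1r : forall x, dmul x done = x;
  dmulDl : forall x y z, dmul (dadd x y) z = dadd (dmul x z) (dmul y z);
  dmulDr : forall x y z, dmul x (dadd y z) = dadd (dmul x y) (dmul x z);
  dmul0l : forall x, dmul dzero x = dzero;
  dmul0r : forall x, dmul x dzero = dzero;
  dsup_ub : forall e x, rsem dmul done e x -> dadd x (dsup e) = dsup e;
  dsup_least : forall e y, (forall x, rsem dmul done e x -> dadd x y = y) ->
                           dadd (dsup e) y = y;
  dsup_mul : forall e f, dsup (RMul e f) = dmul (dsup e) (dsup f)
}.
Arguments dadd {r}. Arguments dmul {r}. Arguments dzero {r}. Arguments done {r}.
Arguments dsup {r}.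

Definition kstar {K : rdioid} (x : K) : K := dsup (RStar (RAtom x)).

Definition rmorph {K T : rdioid} (f : K -> T) : Prop :=
  f dzero = dzero /\ f done = done /\
  (forall x y, f (dadd x y) = dadd (f x) (f y)) /\
  (forall x y, f (dmul x y) = dmul (f x) (f y)) /\
  (forall e, f (dsup e) = dsup (rmap f e)).

Inductive delta := b | p | d | q.

Definition lang := list delta -> Prop.
Definition regular (L : lang) : Prop :=
  exists e : rexp (list delta), forall w, L w <-> rsem (@app delta) nil e w.
Definition RegLang := { L : lang | regular L }.

Definition lzero : lang := fun _ => False.
Definition lone : lang := fun w => w = nil.
Definition ladd (L L' : lang) : lang := fun w => L w \/ L' w.
Definition lmul (L L' : lang) : lang :=
  fun w => exists u v, L u /\ L' v /\ w = u ++ v.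
Definition lsing (a : delta) : lang := fun w => w = [a].

Lemma regular_zero : regular lzero.
Proof. exists RZero; intro w; simpl; tauto. Qed.
Lemma regular_one : regular lone.
Proof. exists ROne; intro w; simpl; tauto. Qed.
Lemma regular_sing a : regular (lsing a).
Proof. exists (RAtom [a]); intro w; simpl; unfold lsing; tauto. Qed.
Lemma regular_add L L' : regular L -> regular L' -> regular (ladd L L').
Proof.
  intros [e He] [f Hf]; exists (RPlus e f); intro w; simpl; unfold ladd.
  rewrite He, Hf; tauto.
Qed.
Lemma regular_mul L L' : regular L -> regular L' -> regular (lmul L L').
Proof.
  intros [e He] [f Hf]; exists (RMul e f); intro w; simpl; unfold lmul; split.
  - intros (u & v & Hu & Hv & ->); exists u, v; rewrite <- He, <- Hf; auto.
  - intros (u & v & Hu & Hv & ->); exists u, v; rewrite He, Hf; auto.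
Qed.

Definition rzero : RegLang := exist _ lzero regular_zero.
Definition rone : RegLang := exist _ lone regular_one.
Definition radd (L L' : RegLang) : RegLang :=
  exist _ (ladd (proj1_sig L) (proj1_sig L'))
          (regular_add (proj2_sig L) (proj2_sig L')).
Definition rmul (L L' : RegLang) : RegLang :=
  exist _ (lmul (proj1_sig L) (proj1_sig L'))
          (regular_mul (proj2_sig L) (proj2_sig L')).
Definition rsing (a : delta) : RegLang := exist _ (lsing a) (regular_sing a).

(** s is the supremum (= union) in R Delta_2^* of the regular subset
    rsem rmul rone A of the multiplicative monoid of R Delta_2^*. *)
Definition is_union (A : rexp RegLang) (s : RegLang) : Prop :=
  forall w, proj1_sig s w <-> exists L, rsem rmul rone A L /\ proj1_sig L w.

Definition Rcong (R : RegLang -> RegLang -> Prop) : Prop :=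
  (forall x, R x x) /\ (forall x y, R x y -> R y x) /\
  (forall x y z, R x y -> R y z -> R x z) /\
  (forall x x' y y', R x x' -> R y y' -> R (radd x y) (radd x' y')) /\
  (forall x x' y y', R x x' -> R y y' -> R (rmul x y) (rmul x' y')) /\
  (* regular sets with equal downward closures modulo R have R-congruent sups;
     x/R lies in the downward closure of A/R iff [x + a] = [a] for some a in A *)
  (forall (A B : rexp RegLang) (sA sB : RegLang), is_union A sA -> is_union B sB ->
     (forall x, (exists a, rsem rmul rone A a /\ R (radd x a) a) <->
                (exists c, rsem rmul rone B c /\ R (radd x c) c)) ->
     R sA sB).

Definition rho (L L' : RegLang) : Prop :=
  forall R, Rcong R ->
    R (rmul (rsing b) (rsing d)) rone -> R (rmul (rsing p) (rsing q)) rone ->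
    R (rmul (rsing b) (rsing q)) rzero -> R (rmul (rsing p) (rsing d)) rzero ->
    R L L'.

(** R-morphisms C_2' = R Delta_2^*/rho -> T, presented as R-morphisms
    R Delta_2^* -> T that are constant on rho-classes. *)
Definition c2morph {T : rdioid} (g : RegLang -> T) : Prop :=
  (forall L L', rho L L' -> g L = g L') /\
  g rzero = dzero /\ g rone = done /\
  (forall x y, g (radd x y) = dadd (g x) (g y)) /\
  (forall x y, g (rmul x y) = dmul (g x) (g y)) /\
  (forall A s, is_union A s -> g s = dsup (rmap g A)).

Definition tensor_data {K T : rdioid} (iota : K -> T) (g : RegLang -> T) : Prop :=
  rmorph iota /\ c2morph g /\
  (forall x L, dmul (iota x) (g L) = dmul (g L) (iota x)).

Definition is_tensor_C2 {K T : rdioid} (iota : K -> T) (g : RegLang -> T) : Prop :=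
  tensor_data iota g /\
  forall (T' : rdioid) (iota' : K -> T') (g' : RegLang -> T'),
    tensor_data iota' g' ->
    exists h : T -> T', rmorph h /\ (forall x, h (iota x) = iota' x) /\
      (forall L, h (g L) = g' L) /\
      (forall h' : T -> T', rmorph h' -> (forall x, h' (iota x) = iota' x) ->
         (forall L, h' (g L) = g' L) -> forall t, h' t = h t).

(** * Matrices (indexed by nat; only indices < n matter) *)
Fixpoint fsum {T : rdioid} (n : nat) (f : nat -> T) : T :=
  match n with 0 => dzero | S m => dadd (fsum m f) (f m) end.

(** Standard block-recursive matrix star, splitting n+1 = 1 + n:
    M = [A B; C D], F = A + B D* C,
    M* = [F*, F* B D*; D* C F*, D* + D* C F* B D*]. *)
Fixpoint mstar {T : rdioid} (n : nat) (M : nat -> nat -> T) : nat -> nat -> T :=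
  match n with
  | 0 => fun _ _ => dzero
  | S m =>
    let Ds := mstar m (fun i j => M (S i) (S j)) in
    let u := fun j => fsum m (fun k => dmul (M 0 (S k)) (Ds k j)) in
    let v := fun i => fsum m (fun k => dmul (Ds i k) (M (S k) 0)) in
    let Fs := kstar (dadd (M 0 0) (fsum m (fun k => dmul (M 0 (S k)) (v k)))) in
    fun i j => match i, j with
               | 0, 0 => Fs
               | 0, S j' => dmul Fs (u j')
               | S i', 0 => dmul (v i') Fs
               | S i', S j' => dadd (Ds i' j') (dmul (dmul (v i') Fs) (u j'))
               end
  end.

Inductive ent_bp := E0 | Eb | Ep.
Inductive ent_dq := F0 | Fd | Fq.

Definition bool_el {T : rdioid} (x : bool) : T := if x then done else dzero.
Definition bp_el {T : rdioid} (g : RegLang -> T) (x : ent_bp) : T :=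
  match x with E0 => dzero | Eb => g (rsing b) | Ep => g (rsing p) end.
Definition dq_el {T : rdioid} (g : RegLang -> T) (x : ent_dq) : T :=
  match x with F0 => dzero | Fd => g (rsing d) | Fq => g (rsing q) end.

Definition row_mat_col {T : rdioid} (n : nat) (S : nat -> T) (M : nat -> nat -> T)
  (F : nat -> T) : T :=
  fsum n (fun j => dmul (fsum n (fun i => dmul (S i) (M i j))) (F j)).

(* Call an element of [K ⊗ C_2'] representable if it has the form [S (U + X + V)* F].
   Every [iota k] and every letter [g a] is an entry of a two-state matrix, hence
   representable; sums and products of representable elements are read off
   block-triangular matrices, and [x x*] off [M + F S], all through the characterisation
   of [M* F] as the least solution of [x = F + M x]. So the representable elements are
   closed under suprema of regular sets, and since every regular language is the regular
   union of its words, they contain the image of [C_2'] as well. They therefore carry a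
   sub-R-dioid through which [iota] and [g] factor, and the uniqueness clause of the
   universal property forces it to be the whole tensor product. *)

From Stdlib Require Import List Arith Lia FunctionalExtensionality ProofIrrelevance.
Import ListNotations.

Infix "⊕" := dadd (at level 50, left associativity).
Infix "⊗" := dmul (at level 40, left associativity).

Definition dle {T : rdioid} (x y : T) : Prop := x ⊕ y = y.
Infix "≼" := dle (at level 70).

Section Order.
Context {T : rdioid}.
Implicit Types x y z : T.

Lemma dadd0r x : x ⊕ dzero = x.
Proof. rewrite daddC; apply dadd0. Qed.

Lemma daddCA x y z : x ⊕ (y ⊕ z) = y ⊕ (x ⊕ z).
Proof. now rewrite !daddA, (daddC _ x). Qed.

Lemma dadd_swap x y z (u : T) : x ⊕ y ⊕ (z ⊕ u) = x ⊕ z ⊕ (y ⊕ u).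
Proof. rewrite <- !daddA; f_equal; rewrite !daddA; f_equal; apply daddC. Qed.

Lemma dle_refl x : x ≼ x.
Proof. apply daddI. Qed.

Lemma dle_eq x y : x = y -> x ≼ y.
Proof. intros ->; apply dle_refl. Qed.

Lemma dle_trans x y z : x ≼ y -> y ≼ z -> x ≼ z.
Proof. unfold dle; intros Hxy Hyz. rewrite <- Hyz, daddA, Hxy. reflexivity. Qed.

Lemma dle_antisym x y : x ≼ y -> y ≼ x -> x = y.
Proof. unfold dle; intros Hxy Hyx. rewrite <- Hxy, daddC. symmetry; exact Hyx. Qed.

Lemma dle0 x : dzero ≼ x.
Proof. apply dadd0. Qed.

Lemma dle_addl x y : x ≼ x ⊕ y.
Proof. unfold dle. rewrite daddA, daddI. reflexivity. Qed.

Lemma dle_addr x y : y ≼ x ⊕ y.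
Proof. rewrite daddC; apply dle_addl. Qed.

Lemma dadd_lub x y z : x ≼ z -> y ≼ z -> x ⊕ y ≼ z.
Proof. unfold dle; intros Hx Hy. rewrite <- daddA, Hy, Hx. reflexivity. Qed.

Lemma dadd_le_mono x x' y y' : x ≼ x' -> y ≼ y' -> x ⊕ y ≼ x' ⊕ y'.
Proof.
  intros Hx Hy; apply dadd_lub.
  - apply dle_trans with x'; [exact Hx | apply dle_addl].
  - apply dle_trans with y'; [exact Hy | apply dle_addr].
Qed.

Lemma dmul_le_mono x x' y y' : x ≼ x' -> y ≼ y' -> x ⊗ y ≼ x' ⊗ y'.
Proof.
  unfold dle; intros Hx Hy. apply dle_trans with (x' ⊗ y).
  - unfold dle. rewrite <- dmulDl, Hx. reflexivity.
  - unfold dle. rewrite <- dmulDr, Hy. reflexivity.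
Qed.

Lemma dsup_atom x : dsup (RAtom x) = x.
Proof.
  apply dle_antisym.
  - apply dsup_least; intros z ->; apply dle_refl.
  - apply dsup_ub; reflexivity.
Qed.

Lemma dsup_zero : dsup (@RZero T) = dzero.
Proof. apply dle_antisym; [apply dsup_least; intros z [] | apply dle0]. Qed.

Lemma dsup_one : dsup (@ROne T) = done.
Proof.
  apply dle_antisym.
  - apply dsup_least; intros z ->; apply dle_refl.
  - apply dsup_ub; reflexivity.
Qed.

Lemma dsup_plus (e f : rexp T) : dsup (RPlus e f) = dsup e ⊕ dsup f.
Proof.
  apply dle_antisym.
  - apply dsup_least; intros z [Hz | Hz].
    + apply dle_trans with (dsup e); [apply dsup_ub, Hz | apply dle_addl].
    + apply dle_trans with (dsup f); [apply dsup_ub, Hz | apply dle_addr].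
  - apply dadd_lub; apply dsup_least; intros z Hz; apply dsup_ub; simpl; auto.
Qed.

Lemma kstar_ub x s : Forall (fun y => y = x) s -> fold_right dmul done s ≼ kstar x.
Proof. intros Hs. apply dsup_ub. exists s; auto. Qed.

(* [x* c] is the supremum of the regular set [{x^n c}]. *)
Lemma kstar_ind x c y : c ⊕ x ⊗ y ≼ y -> kstar x ⊗ c ≼ y.
Proof.
  intros H. unfold kstar. rewrite <- (dsup_atom c), <- dsup_mul.
  apply dsup_least. intros z (xn & c' & (s & Hs & ->) & -> & ->).
  induction Hs as [|x' s -> Hs IH]; simpl.
  - rewrite dmul1l. apply dle_trans with (c ⊕ x ⊗ y); [apply dle_addl | exact H].
  - rewrite <- dmulA. apply dle_trans with (c ⊕ x ⊗ y); [| exact H].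
    apply dle_trans with (x ⊗ y); [| apply dle_addr].
    apply dmul_le_mono; [apply dle_refl | exact IH].
Qed.

Lemma kstar_unfold x : kstar x = done ⊕ x ⊗ kstar x.
Proof.
  apply dle_antisym.
  - apply dsup_least. intros z (s & Hs & ->).
    destruct Hs as [|x' s -> Hs]; simpl.
    + apply dle_addl.
    + apply dle_trans with (x ⊗ kstar x); [| apply dle_addr].
      apply dmul_le_mono; [apply dle_refl | apply kstar_ub, Hs].
  - apply dadd_lub.
    + apply (kstar_ub _ nil); constructor.
    + unfold kstar. rewrite <- (dsup_atom x) at 1. rewrite <- dsup_mul.
      apply dsup_least. intros z (x' & y & -> & (s & Hs & ->) & ->).
      apply dsup_ub. exists (x :: s). split; [constructor; [reflexivity | exact Hs] | reflexivity].
Qed.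

Lemma dsup_star (e : rexp T) : dsup (RStar e) = kstar (dsup e).
Proof.
  apply dle_antisym.
  - apply dsup_least. intros z (s & Hs & ->).
    induction Hs as [|x s Hx Hs IH]; simpl.
    + apply (kstar_ub _ nil); constructor.
    + rewrite (kstar_unfold (dsup e)). apply dle_trans with (dsup e ⊗ kstar (dsup e));
        [| apply dle_addr].
      apply dmul_le_mono; [apply dsup_ub, Hx | exact IH].
  - rewrite <- (dmul1r _ (kstar (dsup e))). apply kstar_ind. apply dadd_lub.
    + apply dsup_ub. exists nil; auto.
    + rewrite <- dsup_mul. apply dsup_least. intros z (x & y & Hx & (s & Hs & ->) & ->).
      apply dsup_ub. exists (x :: s); auto.
Qed.

End Order.

Section Sums.
Context {T : rdioid}.
Implicit Types u v : nat -> T.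

Lemma fsum_ext n u v : (forall k, k < n -> u k = v k) -> fsum n u = fsum n v.
Proof.
  induction n as [|n IH]; intros Huv; simpl; [reflexivity |].
  rewrite IH by (intros; apply Huv; lia). now rewrite Huv by lia.
Qed.

Lemma fsum_zero n : fsum n (fun _ => @dzero T) = dzero.
Proof. induction n as [|n IH]; simpl; [| rewrite IH, dadd0]; reflexivity. Qed.

Lemma fsum_add n u v : fsum n (fun k => u k ⊕ v k) = fsum n u ⊕ fsum n v.
Proof.
  induction n as [|n IH]; simpl; [now rewrite dadd0 |].
  rewrite IH. apply dadd_swap.
Qed.

Lemma fsum_mull n x u : fsum n (fun k => x ⊗ u k) = x ⊗ fsum n u.
Proof.
  induction n as [|n IH]; simpl; [now rewrite dmul0r |].
  now rewrite IH, dmulDr.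
Qed.

Lemma fsum_mulr n u x : fsum n (fun k => u k ⊗ x) = fsum n u ⊗ x.
Proof.
  induction n as [|n IH]; simpl; [now rewrite dmul0l |].
  now rewrite IH, dmulDl.
Qed.

Lemma fsum_Sl n u : fsum (S n) u = u 0 ⊕ fsum n (fun k => u (S k)).
Proof.
  induction n as [|n IH].
  - simpl. now rewrite dadd0, dadd0r.
  - change (fsum (S (S n)) u) with (fsum (S n) u ⊕ u (S n)).
    rewrite IH. simpl. now rewrite daddA.
Qed.

Lemma fsum_split n1 n2 u :
  fsum (n1 + n2) u = fsum n1 u ⊕ fsum n2 (fun k => u (n1 + k)).
Proof.
  induction n2 as [|n2 IH].
  - rewrite Nat.add_0_r. simpl. now rewrite dadd0r.
  - rewrite Nat.add_succ_r. simpl. now rewrite IH, daddA.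
Qed.

Lemma fsum_swap n m (h : nat -> nat -> T) :
  fsum n (fun i => fsum m (h i)) = fsum m (fun j => fsum n (fun i => h i j)).
Proof.
  induction n as [|n IH]; simpl.
  - symmetry; apply fsum_zero.
  - now rewrite IH, <- fsum_add.
Qed.

Lemma fsum_le_mono n u v : (forall k, k < n -> u k ≼ v k) -> fsum n u ≼ fsum n v.
Proof.
  induction n as [|n IH]; intros Huv; simpl; [apply dle_refl |].
  apply dadd_le_mono; [apply IH; intros; apply Huv |apply Huv]; lia.
Qed.

End Sums.

Definition dot {T : rdioid} (n : nat) (u v : nat -> T) : T := fsum n (fun k => u k ⊗ v k).

Definition mulmv {T : rdioid} (n : nat) (A : nat -> nat -> T) (v : nat -> T) (i : nat) : T :=
  dot n (A i) v.

Section MatrixVector.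
Context {T : rdioid}.
Implicit Types u v : nat -> T.
Implicit Types A B : nat -> nat -> T.

Lemma dot_Sl n u v : dot (S n) u v = u 0 ⊗ v 0 ⊕ dot n (fun k => u (S k)) (fun k => v (S k)).
Proof. apply fsum_Sl. Qed.

Lemma dot_ext n u v v' : (forall k, k < n -> v k = v' k) -> dot n u v = dot n u v'.
Proof. intros Hv. apply fsum_ext; intros k Hk. now rewrite Hv. Qed.

Lemma dot_mull n x u v : dot n (fun k => x ⊗ u k) v = x ⊗ dot n u v.
Proof. unfold dot. rewrite <- fsum_mull. apply fsum_ext; intros; symmetry; apply dmulA. Qed.

Lemma dot0l n v : dot n (fun _ => dzero) v = dzero.
Proof.
  unfold dot. rewrite (fsum_ext _ _ (fun _ => dzero)); [apply fsum_zero |]. intros; apply dmul0l.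
Qed.

Lemma dot_addl n u u' v : dot n (fun k => u k ⊕ u' k) v = dot n u v ⊕ dot n u' v.
Proof. unfold dot. rewrite <- fsum_add. apply fsum_ext; intros; apply dmulDl. Qed.

Lemma dot_addr n u v v' : dot n u (fun k => v k ⊕ v' k) = dot n u v ⊕ dot n u v'.
Proof. unfold dot. rewrite <- fsum_add. apply fsum_ext; intros; apply dmulDr. Qed.

Lemma dot_mulr n u v x : dot n u (fun k => v k ⊗ x) = dot n u v ⊗ x.
Proof. unfold dot. rewrite <- fsum_mulr. apply fsum_ext; intros; apply dmulA. Qed.

Lemma dot_le_mono n u v v' : (forall k, k < n -> v k ≼ v' k) -> dot n u v ≼ dot n u v'.
Proof. intros Hv. apply fsum_le_mono; intros. apply dmul_le_mono; auto using dle_refl. Qed.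

Lemma dot_mulmv n m u B v :
  dot n (fun k => dot m u (fun l => B l k)) v = dot m u (mulmv n B v).
Proof.
  unfold mulmv, dot.
  transitivity (fsum n (fun k => fsum m (fun l => u l ⊗ (B l k ⊗ v k)))).
  - apply fsum_ext; intros k _. rewrite <- fsum_mulr.
    apply fsum_ext; intros; symmetry; apply dmulA.
  - rewrite fsum_swap. apply fsum_ext; intros l _. apply fsum_mull.
Qed.

Lemma mulmv_ext n A v v' i : (forall k, k < n -> v k = v' k) -> mulmv n A v i = mulmv n A v' i.
Proof. apply dot_ext. Qed.

Lemma mulmv_le_mono n A v v' i :
  (forall k, k < n -> v k ≼ v' k) -> mulmv n A v i ≼ mulmv n A v' i.
Proof. apply dot_le_mono. Qed.

End MatrixVector.

(** * Matrix star as a least solution *)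

Definition star_col {T : rdioid} (n : nat) (M : nat -> nat -> T) (F : nat -> T) : nat -> T :=
  mulmv n (mstar n M) F.

Definition is_least_sol {T : rdioid} (n : nat) (M : nat -> nat -> T) (F x : nat -> T) : Prop :=
  (forall i, i < n -> x i = F i ⊕ mulmv n M x i) /\
  (forall y, (forall i, i < n -> F i ⊕ mulmv n M y i ≼ y i) -> forall i, i < n -> x i ≼ y i).

Lemma row_mat_col_star_col {T : rdioid} n (Sv : nat -> T) M F :
  row_mat_col n Sv (mstar n M) F = dot n Sv (star_col n M F).
Proof. apply dot_mulmv. Qed.

Section StarColStep.
Context {T : rdioid} (m : nat) (M : nat -> nat -> T).

Let D i j := M (S i) (S j).
Let r k := M 0 (S k).
Let w k := M (S k) 0.
Let v := star_col m D w.
Let s := M 0 0 ⊕ dot m r v.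
Let z (F : nat -> T) := kstar s ⊗ (F 0 ⊕ dot m r (star_col m D (fun k => F (S k)))).

Lemma star_col_S0 F : star_col (S m) M F 0 = z F.
Proof.
  unfold star_col at 1, mulmv. rewrite dot_Sl.
  change (mstar (S m) M 0 0) with (kstar s).
  change (dot m (fun k => mstar (S m) M 0 (S k)) (fun k => F (S k))) with
    (dot m (fun k => kstar s ⊗ dot m r (fun l => mstar m D l k)) (fun k => F (S k))).
  unfold z. rewrite dmulDr. f_equal.
  unfold star_col. now rewrite dot_mull, dot_mulmv.
Qed.

Lemma star_col_SS F i :
  star_col (S m) M F (S i) = star_col m D (fun k => F (S k)) i ⊕ v i ⊗ z F.
Proof.
  unfold star_col at 1, mulmv. rewrite dot_Sl.
  change (mstar (S m) M (S i) 0) with (v i ⊗ kstar s).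
  change (dot m (fun k => mstar (S m) M (S i) (S k)) (fun k => F (S k))) with
    (dot m (fun k => mstar m D i k ⊕ v i ⊗ kstar s ⊗ dot m r (fun l => mstar m D l k))
       (fun k => F (S k))).
  rewrite dot_addl, dot_mull, dot_mulmv. fold (star_col m D (fun k => F (S k))).
  unfold z. rewrite (dmulDr _ (kstar s)), dmulDr, !dmulA.
  change (dot m (mstar m D i) _) with (star_col m D (fun k => F (S k)) i).
  now rewrite daddA, (daddC _ (_ ⊗ F 0)), <- daddA.
Qed.

Lemma dot_star_col_S a F :
  dot (S m) a (star_col (S m) M F) =
  a 0 ⊗ z F ⊕ dot m (fun k => a (S k)) (star_col m D (fun k => F (S k)))
  ⊕ dot m (fun k => a (S k)) v ⊗ z F.
Proof.
  rewrite dot_Sl, star_col_S0, (dot_ext _ _ _ (fun k => _ ⊕ v k ⊗ z F))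
    by (intros; apply star_col_SS).
  now rewrite dot_addr, dot_mulr, daddA.
Qed.

Hypothesis IH : forall F, is_least_sol m D F (star_col m D F).

Lemma star_col_S_fix F :
  forall i, i < S m -> star_col (S m) M F i = F i ⊕ mulmv (S m) M (star_col (S m) M F) i.
Proof.
  intros [|i] Hi; unfold mulmv; rewrite dot_star_col_S.
  - rewrite star_col_S0. unfold z at 1.
    rewrite kstar_unfold, dmulDl, dmul1l, <- dmulA. fold (z F).
    unfold s. rewrite dmulDl. change (fun k => M 0 (S k)) with r.
    rewrite <- !daddA. f_equal. apply daddCA.
  - rewrite star_col_SS. unfold v.
    rewrite (proj1 (IH _) i), (proj1 (IH w) i), dmulDl by lia.
    change (fun k => M (S i) (S k)) with (D i).
    rewrite <- !daddA. f_equal. apply daddCA.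
Qed.

Lemma star_col_S_least F y :
  (forall i, i < S m -> F i ⊕ mulmv (S m) M y i ≼ y i) ->
  forall i, i < S m -> star_col (S m) M F i ≼ y i.
Proof.
  intros Hy.
  set (F' := fun k => F (S k)).
  assert (Htail : forall i, i < m -> star_col m D F' i ⊕ v i ⊗ y 0 ≼ y (S i)).
  { intros i Hi. unfold v, star_col, mulmv.
    rewrite <- dot_mulr, <- dot_addr. fold (mulmv m (mstar m D) (fun k => F' k ⊕ w k ⊗ y 0) i).
    apply (proj2 (IH _) (fun k => y (S k))); [| exact Hi].
    intros j Hj. apply dle_trans with (F (S j) ⊕ mulmv (S m) M y (S j)); [| apply Hy; lia].
    apply dle_eq. unfold mulmv at 2. rewrite dot_Sl, <- daddA. reflexivity. }
  assert (Hz : z F ≼ y 0).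
  { apply kstar_ind. apply dle_trans with (F 0 ⊕ mulmv (S m) M y 0); [| apply Hy; lia].
    unfold mulmv. rewrite dot_Sl. change (fun k => M 0 (S k)) with r.
    apply dle_trans with
      (F 0 ⊕ (M 0 0 ⊗ y 0 ⊕ dot m r (fun k => star_col m D F' k ⊕ v k ⊗ y 0))).
    - apply dle_eq. unfold s. rewrite dmulDl, dot_addr, dot_mulr.
      rewrite <- !daddA. f_equal. apply daddCA.
    - apply dadd_le_mono, dadd_le_mono, dot_le_mono; auto using dle_refl. }
  intros [|i] Hi.
  - rewrite star_col_S0. exact Hz.
  - rewrite star_col_SS.
    apply dle_trans with (star_col m D F' i ⊕ v i ⊗ y 0); [| apply Htail; lia].
    apply dadd_le_mono, dmul_le_mono; auto using dle_refl.
Qed.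

End StarColStep.

Lemma star_col_least {T : rdioid} n (M : nat -> nat -> T) F : is_least_sol n M F (star_col n M F).
Proof.
  revert M F. induction n as [|m IH]; intros M F.
  - split; intros; lia.
  - split; [apply star_col_S_fix | apply star_col_S_least]; intros; apply IH.
Qed.

Definition blockmx {A : Type} (z : A) (n1 : nat) (A1 C B : nat -> nat -> A) (i j : nat) : A :=
  if i <? n1 then (if j <? n1 then A1 i j else C i (j - n1))
  else (if j <? n1 then z else B (i - n1) (j - n1)).

Definition catv {A : Type} (n1 : nat) (v1 v2 : nat -> A) (i : nat) : A :=
  if i <? n1 then v1 i else v2 (i - n1).

Lemma catv_l {A : Type} n1 (v1 v2 : nat -> A) i : i < n1 -> catv n1 v1 v2 i = v1 i.
Proof. intros Hi; unfold catv. now rewrite (proj2 (Nat.ltb_lt _ _) Hi). Qed.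

Lemma catv_r {A : Type} n1 (v1 v2 : nat -> A) i : catv n1 v1 v2 (n1 + i) = v2 i.
Proof. unfold catv. destruct (Nat.ltb_spec (n1 + i) n1); [lia |]. f_equal; lia. Qed.

Lemma dot_catv {T : rdioid} n1 n2 (u1 u2 x : nat -> T) :
  dot (n1 + n2) (catv n1 u1 u2) x = dot n1 u1 x ⊕ dot n2 u2 (fun k => x (n1 + k)).
Proof.
  unfold dot. rewrite fsum_split. f_equal; apply fsum_ext; intros k Hk.
  - now rewrite catv_l.
  - now rewrite catv_r.
Qed.

Section Blocks.
Context {T : rdioid} (n1 n2 : nat) (A C B : nat -> nat -> T).

Let M := blockmx dzero n1 A C B.

Lemma mulmv_block_top x i : i < n1 ->
  mulmv (n1 + n2) M x i = mulmv n1 A x i ⊕ mulmv n2 C (fun k => x (n1 + k)) i.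
Proof.
  intros Hi. unfold mulmv, dot. rewrite fsum_split. f_equal; apply fsum_ext; intros k Hk;
    unfold M, blockmx; rewrite (proj2 (Nat.ltb_lt _ _) Hi).
  - now rewrite (proj2 (Nat.ltb_lt _ _) Hk).
  - destruct (Nat.ltb_spec (n1 + k) n1); [lia |]. do 3 f_equal; lia.
Qed.

Lemma mulmv_block_bot x i :
  mulmv (n1 + n2) M x (n1 + i) = mulmv n2 B (fun k => x (n1 + k)) i.
Proof.
  unfold mulmv, dot. rewrite fsum_split, (fsum_ext n1 _ (fun _ => dzero)), fsum_zero, dadd0.
  - apply fsum_ext; intros k Hk. unfold M, blockmx.
    destruct (Nat.ltb_spec (n1 + i) n1), (Nat.ltb_spec (n1 + k) n1); try lia.
    do 3 f_equal; lia.
  - intros k Hk. unfold M, blockmx.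
    destruct (Nat.ltb_spec (n1 + i) n1); [lia |].
    now rewrite (proj2 (Nat.ltb_lt _ _) Hk), dmul0l.
Qed.

Variables F1 F2 : nat -> T.

Let x := star_col (n1 + n2) M (catv n1 F1 F2).
Let x2 := star_col n2 B F2.
Let x1 := star_col n1 A (fun i => F1 i ⊕ mulmv n2 C x2 i).

Lemma star_col_block_le : forall i, i < n1 + n2 -> x i ≼ catv n1 x1 x2 i.
Proof.
  apply (proj2 (star_col_least _ _ _)). intros i Hi. apply dle_eq.
  destruct (Nat.ltb_spec i n1) as [Hi1 | Hi1].
  - rewrite mulmv_block_top, !catv_l by assumption.
    rewrite (mulmv_ext n1 A _ x1) by (intros; now apply catv_l).
    rewrite (mulmv_ext n2 C _ x2) by (intros; apply catv_r).
    symmetry. etransitivity; [apply (proj1 (star_col_least _ _ _) i Hi1) |]. fold x1.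
    cbv beta. now rewrite <- daddA, (daddC _ (mulmv n1 A x1 i)).
  - replace i with (n1 + (i - n1)) by lia.
    rewrite mulmv_block_bot, !catv_r, (mulmv_ext _ _ _ x2) by (intros; apply catv_r).
    symmetry. apply (proj1 (star_col_least _ _ _)). lia.
Qed.

Lemma star_col_block :
  (forall i, i < n1 -> x i = x1 i) /\ (forall i, i < n2 -> x (n1 + i) = x2 i).
Proof.
  destruct (star_col_least (n1 + n2) M (catv n1 F1 F2)) as [Hfix _]. fold x in Hfix.
  assert (Hx2 : forall i, i < n2 -> x2 i ≼ x (n1 + i)).
  { apply (proj2 (star_col_least _ _ _)). intros i Hi. apply dle_eq.
    rewrite (Hfix (n1 + i)), mulmv_block_bot, catv_r by lia. reflexivity. }
  assert (Hx1 : forall i, i < n1 -> x1 i ≼ x i).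
  { apply (proj2 (star_col_least _ _ _)). intros i Hi.
    rewrite (Hfix i), mulmv_block_top, catv_l, <- daddA by lia.
    apply dadd_le_mono; [apply dle_refl |].
    rewrite daddC. apply dadd_le_mono; [apply dle_refl |].
    apply mulmv_le_mono. exact Hx2. }
  split; intros i Hi; apply dle_antisym.
  - rewrite <- (catv_l n1 x1 x2 i) by exact Hi. apply star_col_block_le. lia.
  - now apply Hx1.
  - rewrite <- (catv_r n1 x1 x2 i). apply star_col_block_le. lia.
  - now apply Hx2.
Qed.

End Blocks.

(* With [v = M* F], the least solution [w] of [w = F + M w + F (S w)] is squeezed
   between [v (S v)*] and [v (1 + S w)]. *)
Lemma star_col_add_outer {T : rdioid} n (M : nat -> nat -> T) (F Sv : nat -> T) :
  forall i, i < n ->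
  star_col n (fun i j => M i j ⊕ F i ⊗ Sv j) F i =
  star_col n M F i ⊗ kstar (dot n Sv (star_col n M F)).
Proof.
  set (M' := fun i j => M i j ⊕ F i ⊗ Sv j).
  set (v := star_col n M F). set (w := star_col n M' F). set (phi := dot n Sv v).
  destruct (star_col_least n M F) as [Hv Hv_least]. fold v in Hv, Hv_least.
  destruct (star_col_least n M' F) as [Hw Hw_least]. fold w in Hw, Hw_least.
  assert (HM' : forall y i, mulmv n M' y i = mulmv n M y i ⊕ F i ⊗ dot n Sv y).
  { intros y i. unfold mulmv at 1, M'. now rewrite dot_addl, dot_mull. }
  assert (Hw_le : forall i, i < n -> w i ≼ v i ⊗ kstar phi).
  { apply Hw_least. intros i Hi. apply dle_eq.
    rewrite HM', (Hv i Hi), dmulDl, dot_mulr. fold phi.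
    unfold mulmv at 1. rewrite dot_mulr.
    assert (Hunf : F i ⊗ kstar phi = F i ⊕ F i ⊗ (phi ⊗ kstar phi))
      by (rewrite (kstar_unfold phi) at 1; now rewrite dmulDr, dmul1r).
    rewrite Hunf, <- daddA. f_equal. apply daddC. }
  set (c := dot n Sv w).
  assert (Hge : forall i, i < n -> v i ⊗ (done ⊕ c) ≼ w i).
  { intros i Hi. unfold v, star_col, mulmv. rewrite <- dot_mulr.
    apply (proj2 (star_col_least n M _)); [| exact Hi].
    intros j Hj. apply dle_eq.
    rewrite (Hw j Hj), HM', dmulDr, dmul1r. fold c.
    now rewrite <- !daddA, (daddC _ (F j ⊗ c)). }
  assert (Hstar : kstar phi ≼ done ⊕ c).
  { rewrite <- (dmul1r _ (kstar phi)). apply kstar_ind.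
    apply dadd_le_mono; [apply dle_refl |].
    unfold phi, c, dot. rewrite <- fsum_mulr. apply fsum_le_mono; intros k Hk.
    rewrite <- dmulA. apply dmul_le_mono; [apply dle_refl | now apply Hge]. }
  intros i Hi. apply dle_antisym; [now apply Hw_le |].
  apply dle_trans with (v i ⊗ (done ⊕ c)); [| now apply Hge].
  apply dmul_le_mono; [apply dle_refl | exact Hstar].
Qed.

(** * Sub-R-dioids and the universal property *)

Fixpoint ratom_all {A : Type} (P : A -> Prop) (e : rexp A) : Prop :=
  match e with
  | RZero | ROne => True
  | RAtom a => P a
  | RPlus e f | RMul e f => ratom_all P e /\ ratom_all P f
  | RStar e => ratom_all P e
  end.

Lemma rmap_comp {A B C : Type} (f : A -> B) (h : B -> C) e :
  rmap h (rmap f e) = rmap (fun x => h (f x)) e.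
Proof. induction e; simpl; congruence. Qed.

Lemma rmap_id {A : Type} (e : rexp A) : rmap (fun x => x) e = e.
Proof. induction e; simpl; congruence. Qed.

Lemma ratom_all_rmap {A B : Type} (P : B -> Prop) (f : A -> B) e :
  (forall a, P (f a)) -> ratom_all P (rmap f e).
Proof. intros Hf; induction e; simpl; auto. Qed.

Definition dsup_closed {T : rdioid} (P : T -> Prop) : Prop :=
  forall e, ratom_all P e -> P (dsup e).

Section RsemMorph.
Context {A B : Type} (mulA : A -> A -> A) (oneA : A) (mulB : B -> B -> B) (oneB : B) (f : A -> B).
Hypothesis f_mul : forall x y, f (mulA x y) = mulB (f x) (f y).
Hypothesis f_one : f oneA = oneB.

Lemma rsem_rmap e x : rsem mulA oneA e x -> rsem mulB oneB (rmap f e) (f x).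
Proof.
  revert x; induction e as [| | a | e IHe e' IHe' | e IHe e' IHe' | e IHe]; simpl; intros x Hx.
  - destruct Hx.
  - now subst.
  - now subst.
  - destruct Hx; [left | right]; auto.
  - destruct Hx as (y & z & Hy & Hz & ->). exists (f y), (f z). rewrite f_mul; auto.
  - destruct Hx as (s & Hs & ->). exists (map f s). split.
    + induction Hs; simpl; constructor; auto.
    + clear Hs. induction s as [|a s IHs]; simpl; [| rewrite f_mul, IHs]; auto.
Qed.

Lemma rsem_rmap_inv e z : rsem mulB oneB (rmap f e) z -> exists x, rsem mulA oneA e x /\ f x = z.
Proof.
  revert z; induction e as [| | a | e IHe e' IHe' | e IHe e' IHe' | e IHe]; simpl; intros z Hz.
  - destruct Hz.
  - subst. exists oneA; auto.
  - subst. exists a; auto.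
  - destruct Hz as [Hz | Hz];
      [destruct (IHe _ Hz) as (x & ? & ?) | destruct (IHe' _ Hz) as (x & ? & ?)]; exists x; auto.
  - destruct Hz as (y & w & Hy & Hw & ->).
    destruct (IHe _ Hy) as (x1 & H1 & <-), (IHe' _ Hw) as (x2 & H2 & <-).
    exists (mulA x1 x2). split; [exists x1, x2 |]; auto.
  - destruct Hz as (s & Hs & ->). induction Hs as [|y s Hy Hs IH]; simpl.
    + exists oneA. split; [exists nil |]; auto.
    + destruct (IHe _ Hy) as (x & Hx & <-), IH as (xs & (l & Hl & ->) & <-).
      exists (mulA x (fold_right mulA oneA l)). split; [exists (x :: l) |]; auto.
Qed.

End RsemMorph.

Section SubRdioid.
Context {T : rdioid} (P : T -> Prop).
Hypothesis P_dsup : dsup_closed P.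

Lemma dsup_closed0 : P dzero.
Proof. rewrite <- dsup_zero. now apply P_dsup. Qed.

Lemma dsup_closed1 : P done.
Proof. rewrite <- dsup_one. now apply P_dsup. Qed.

Lemma dsup_closedD x y : P x -> P y -> P (x ⊕ y).
Proof.
  intros Hx Hy. rewrite <- (dsup_atom x), <- (dsup_atom y), <- dsup_plus. now apply P_dsup.
Qed.

Lemma dsup_closedM x y : P x -> P y -> P (x ⊗ y).
Proof.
  intros Hx Hy. rewrite <- (dsup_atom x), <- (dsup_atom y), <- dsup_mul. now apply P_dsup.
Qed.

Definition sub_carrier := { x : T | P x }.

Lemma sub_eq (x y : sub_carrier) : proj1_sig x = proj1_sig y -> x = y.
Proof.
  destruct x as [x Hx], y as [y Hy]; simpl; intros ->. f_equal. apply proof_irrelevance.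
Qed.

Definition sub_add (x y : sub_carrier) : sub_carrier :=
  exist P _ (dsup_closedD _ _ (proj2_sig x) (proj2_sig y)).
Definition sub_mul (x y : sub_carrier) : sub_carrier :=
  exist P _ (dsup_closedM _ _ (proj2_sig x) (proj2_sig y)).
Definition sub_zero : sub_carrier := exist P _ dsup_closed0.
Definition sub_one : sub_carrier := exist P _ dsup_closed1.
Definition sub_sup (e : rexp sub_carrier) : sub_carrier :=
  exist P _ (P_dsup _ (ratom_all_rmap P (@proj1_sig _ _) e (@proj2_sig _ _))).

Definition sub_rdioid : rdioid.
Proof.
  refine (@RDioid sub_carrier sub_add sub_mul sub_zero sub_one sub_sup
            _ _ _ _ _ _ _ _ _ _ _ _ _ _); intros; apply sub_eq; simpl.
  - apply daddA.
  - apply daddC.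
  - apply dadd0.
  - apply daddI.
  - apply dmulA.
  - apply dmul1l.
  - apply dmul1r.
  - apply dmulDl.
  - apply dmulDr.
  - apply dmul0l.
  - apply dmul0r.
  - apply dsup_ub. apply (rsem_rmap sub_mul sub_one dmul done); auto.
  - apply dsup_least. intros z Hz.
    destruct (rsem_rmap_inv sub_mul sub_one dmul done (@proj1_sig _ _) (fun _ _ => eq_refl)
                eq_refl _ _ Hz) as (x & Hx & <-).
    exact (f_equal (@proj1_sig _ _) (H x Hx)).
  - apply dsup_mul.
Defined.

End SubRdioid.

Lemma rmorph_id {T : rdioid} : rmorph (fun x : T => x).
Proof. repeat split. intros e. now rewrite rmap_id. Qed.

Lemma rmorph_comp {K T U : rdioid} (f : K -> T) (h : T -> U) :
  rmorph f -> rmorph h -> rmorph (fun x => h (f x)).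
Proof.
  intros (f0 & f1 & fD & fM & fS) (h0 & h1 & hD & hM & hS).
  repeat split; intros; rewrite ?f0, ?f1, ?fD, ?fM, ?fS; auto.
  now rewrite hS, rmap_comp.
Qed.

Section Corestriction.
Context {T : rdioid} (P : T -> Prop) (P_dsup : dsup_closed P).

Lemma rmorph_val : rmorph (fun x : sub_rdioid P P_dsup => proj1_sig x).
Proof. repeat split. Qed.

Lemma rmorph_corestrict {K : rdioid} (f : K -> T) (Pf : forall k, P (f k)) :
  rmorph f -> rmorph (fun k => exist P (f k) (Pf k) : sub_rdioid P P_dsup).
Proof.
  intros (f0 & f1 & fD & fM & fS). repeat split; intros; apply sub_eq; simpl; auto.
  now rewrite rmap_comp.
Qed.

Lemma c2morph_corestrict (g : RegLang -> T) (Pg : forall L, P (g L)) :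
  c2morph g -> c2morph (fun L => exist P (g L) (Pg L) : sub_rdioid P P_dsup).
Proof.
  intros (g_rho & g0 & g1 & gD & gM & gS). repeat split; intros; apply sub_eq; simpl; auto.
  rewrite rmap_comp. now apply gS.
Qed.

End Corestriction.

(* Both structure maps factor through the sub-R-dioid cut out by [P]; by uniqueness in
   the universal property, the identity of [T] equals the composite [T -> sub -> T]. *)
Lemma tensor_C2_ind {K T : rdioid} (iota : K -> T) (g : RegLang -> T) :
  is_tensor_C2 iota g ->
  forall P : T -> Prop, dsup_closed P ->
  (forall k, P (iota k)) -> (forall L, P (g L)) -> forall t, P t.
Proof.
  intros [[Hiota [Hg Hcomm]] Huniv] P P_dsup P_iota P_g.
  set (iota' := fun k => exist P (iota k) (P_iota k) : sub_rdioid P P_dsup).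
  set (g' := fun L => exist P (g L) (P_g L) : sub_rdioid P P_dsup).
  assert (Hdata' : tensor_data iota' g').
  { split; [| split].
    - now apply rmorph_corestrict.
    - now apply c2morph_corestrict.
    - intros; apply sub_eq; apply Hcomm. }
  destruct (Huniv _ iota' g' Hdata') as (h & Hh & Hh_iota & Hh_g & _).
  destruct (Huniv T iota g (conj Hiota (conj Hg Hcomm))) as (h0 & _ & _ & _ & Hh0_uniq).
  assert (Hid : forall t, t = h0 t) by (apply Hh0_uniq; auto using rmorph_id).
  assert (Hval : forall t, proj1_sig (h t) = h0 t).
  { apply Hh0_uniq.
    - apply rmorph_comp; [exact Hh | apply rmorph_val].
    - intros k. now rewrite Hh_iota.
    - intros L. now rewrite Hh_g. }
  intros t. rewrite (Hid t), <- Hval. apply proj2_sig.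
Qed.

(** * Representable elements *)

Lemma bool_el_andb {T : rdioid} (a c : bool) : @bool_el T (andb a c) = bool_el a ⊗ bool_el c.
Proof. destruct a, c; simpl; now rewrite ?dmul1l, ?dmul0l. Qed.

Lemma bool_el_catv {T : rdioid} n1 (S1 S2 : nat -> bool) :
  (fun i => @bool_el T (catv n1 S1 S2 i)) =
  catv n1 (fun i => bool_el (S1 i)) (fun i => bool_el (S2 i)).
Proof. apply functional_extensionality; intros i. unfold catv. now destruct (i <? n1). Qed.

Section Representable.
Context {K T : rdioid} (iota : K -> T) (g : RegLang -> T).
Hypothesis Hiota : rmorph iota.

Definition entry_mx (U : nat -> nat -> ent_bp) (X : nat -> nat -> K) (V : nat -> nat -> ent_dq) :
  nat -> nat -> T :=
  fun i j => bp_el g (U i j) ⊕ iota (X i j) ⊕ dq_el g (V i j).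

Definition representable (phi : T) : Prop :=
  exists n (S F : nat -> bool) U V X,
    phi = dot n (fun i => bool_el (S i)) (star_col n (entry_mx U X V) (fun j => bool_el (F j))).

Lemma iota0 : iota dzero = dzero.
Proof. apply Hiota. Qed.

Lemma iota_bool_el x : iota (bool_el x) = bool_el x.
Proof. destruct x; apply Hiota. Qed.

Lemma entry_mx_block n1 U1 X1 V1 U2 X2 V2 C :
  entry_mx (blockmx E0 n1 U1 (fun _ _ => E0) U2) (blockmx dzero n1 X1 C X2)
           (blockmx F0 n1 V1 (fun _ _ => F0) V2) =
  blockmx dzero n1 (entry_mx U1 X1 V1) (fun i j => iota (C i j)) (entry_mx U2 X2 V2).
Proof.
  apply functional_extensionality; intro i; apply functional_extensionality; intro j.
  unfold entry_mx, blockmx. destruct (i <? n1), (j <? n1); simpl; auto.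
  - now rewrite dadd0, dadd0r.
  - now rewrite iota0, dadd0, dadd0r.
Qed.

Lemma representable0 : representable dzero.
Proof.
  exists 0, (fun _ => false), (fun _ => false),
    (fun _ _ => E0), (fun _ _ => F0), (fun _ _ => dzero).
  reflexivity.
Qed.

(* A single entry [y] is [e_0 M* e_1] for the two-state matrix [M] with [M_01 = y]. *)
Lemma representable_entry u k v : representable (bp_el g u ⊕ iota k ⊕ dq_el g v).
Proof.
  set (y := bp_el g u ⊕ iota k ⊕ dq_el g v).
  set (at01 := fun i j => andb (i =? 0) (j =? 1)).
  exists 2, (fun i => i =? 0), (fun i => i =? 1),
    (fun i j => if at01 i j then u else E0), (fun i j => if at01 i j then v else F0),
    (fun i j => if at01 i j then k else dzero).
  replace (entry_mx _ _ _) with (fun i j => if at01 i j then y else dzero).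
  2:{ apply functional_extensionality; intro i; apply functional_extensionality; intro j.
      unfold entry_mx. destruct (at01 i j); [reflexivity |].
      simpl. now rewrite iota0, dadd0, dadd0r. }
  destruct (star_col_least 2 (fun i j => if at01 i j then y else dzero)
              (fun j => bool_el (j =? 1))) as [Hfix _].
  set (x := star_col _ _ _) in *.
  assert (Hx1 : x 1 = done).
  { rewrite Hfix by lia. cbn [mulmv dot fsum at01 Nat.eqb andb bool_el].
    now rewrite !dmul0l, !dadd0, dadd0r. }
  assert (Hx0 : x 0 = y).
  { rewrite Hfix by lia. cbn [mulmv dot fsum at01 Nat.eqb andb bool_el].
    now rewrite Hx1, !dmul0l, dmul1r, !dadd0. }
  cbn [dot fsum Nat.eqb bool_el]. now rewrite Hx0, dmul1l, dmul0l, dadd0, dadd0r.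
Qed.

Lemma representable_iota k : representable (iota k).
Proof.
  generalize (representable_entry E0 k F0). cbn [bp_el dq_el]. now rewrite dadd0, dadd0r.
Qed.

Lemma representable1 : representable done.
Proof. rewrite <- (proj1 (proj2 Hiota)). apply representable_iota. Qed.

Lemma representable_letter a : representable (g (rsing a)).
Proof.
  destruct a;
    [ generalize (representable_entry Eb dzero F0) | generalize (representable_entry Ep dzero F0)
    | generalize (representable_entry E0 dzero Fd) | generalize (representable_entry E0 dzero Fq) ];
    cbn [bp_el dq_el]; now rewrite iota0, ?dadd0, ?dadd0r.
Qed.

Lemma representable_add x y : representable x -> representable y -> representable (x ⊕ y).
Proof.
  intros (n1 & S1 & F1 & U1 & V1 & X1 & ->) (n2 & S2 & F2 & U2 & V2 & X2 & ->).
  exists (n1 + n2), (catv n1 S1 S2), (catv n1 F1 F2),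
    (blockmx E0 n1 U1 (fun _ _ => E0) U2), (blockmx F0 n1 V1 (fun _ _ => F0) V2),
    (blockmx dzero n1 X1 (fun _ _ => dzero) X2).
  rewrite entry_mx_block, !bool_el_catv, dot_catv.
  destruct (star_col_block n1 n2 (entry_mx U1 X1 V1) (fun _ _ => iota dzero) (entry_mx U2 X2 V2)
              (fun j => bool_el (F1 j)) (fun j => bool_el (F2 j))) as [Htop Hbot].
  f_equal; apply dot_ext; intros i Hi; [rewrite Htop by exact Hi | now rewrite Hbot].
  apply mulmv_ext; intros k _. unfold mulmv. now rewrite iota0, dot0l, dadd0r.
Qed.

Lemma representable_mul x y : representable x -> representable y -> representable (x ⊗ y).
Proof.
  intros (n1 & S1 & F1 & U1 & V1 & X1 & ->) (n2 & S2 & F2 & U2 & V2 & X2 & ->).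
  exists (n1 + n2), (catv n1 S1 (fun _ => false)), (catv n1 (fun _ => false) F2),
    (blockmx E0 n1 U1 (fun _ _ => E0) U2), (blockmx F0 n1 V1 (fun _ _ => F0) V2),
    (blockmx dzero n1 X1 (fun i j => bool_el (andb (F1 i) (S2 j))) X2).
  rewrite entry_mx_block, !bool_el_catv, dot_catv. cbn [bool_el].
  rewrite dot0l, dadd0r, <- dot_mulr.
  destruct (star_col_block n1 n2 (entry_mx U1 X1 V1)
              (fun i j => iota (bool_el (andb (F1 i) (S2 j)))) (entry_mx U2 X2 V2)
              (fun _ => dzero) (fun j => bool_el (F2 j))) as [Htop _].
  apply dot_ext; intros i Hi. rewrite Htop by exact Hi.
  unfold star_col, mulmv. rewrite <- dot_mulr. apply dot_ext; intros k _.
  rewrite dadd0. unfold dot. rewrite <- fsum_mull. apply fsum_ext; intros j _.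
  now rewrite iota_bool_el, bool_el_andb, dmulA.
Qed.

Lemma representable_mul_kstar x : representable x -> representable (x ⊗ kstar x).
Proof.
  intros (n & S & F & U & V & X & ->).
  exists n, S, F, U, V, (fun i j => X i j ⊕ bool_el (andb (F i) (S j))).
  replace (entry_mx U (fun i j => X i j ⊕ _) V) with
    (fun i j => entry_mx U X V i j ⊕ bool_el (F i) ⊗ bool_el (S j)).
  - rewrite <- dot_mulr. apply dot_ext; intros i Hi.
    symmetry. now apply star_col_add_outer.
  - apply functional_extensionality; intro i; apply functional_extensionality; intro j.
    unfold entry_mx. rewrite (proj1 (proj2 (proj2 Hiota))), iota_bool_el, bool_el_andb.
    now rewrite <- !daddA, (daddC _ (dq_el g (V i j))).
Qed.

Lemma representable_kstar x : representable x -> representable (kstar x).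
Proof.
  intros Hx. rewrite kstar_unfold.
  apply representable_add; [apply representable1 | now apply representable_mul_kstar].
Qed.

Lemma representable_dsup : dsup_closed representable.
Proof.
  intros e; induction e as [| | x | e IHe f IHf | e IHe f IHf | e IHe]; cbn [ratom_all]; intros He.
  - rewrite dsup_zero. apply representable0.
  - rewrite dsup_one. apply representable1.
  - now rewrite dsup_atom.
  - rewrite dsup_plus. apply representable_add; tauto.
  - rewrite dsup_mul. apply representable_mul; tauto.
  - rewrite dsup_star. now apply representable_kstar, IHe.
Qed.

End Representable.

Lemma regular_word (w : list delta) : regular (fun u => u = w).
Proof. exists (RAtom w). intros u. reflexivity. Qed.

Definition word_lang (w : list delta) : RegLang := exist _ _ (regular_word w).

Lemma rsem_word_langs_intro e u : rsem (@app delta) nil e u ->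
  exists L, rsem rmul rone (rmap word_lang e) L /\ proj1_sig L u.
Proof.
  revert u; induction e as [| | w | e IHe e' IHe' | e IHe e' IHe' | e IHe]; simpl; intros u Hu.
  - destruct Hu.
  - subst. now exists rone.
  - subst. now exists (word_lang w).
  - destruct Hu as [Hu | Hu];
      [destruct (IHe _ Hu) as (L & ? & ?) | destruct (IHe' _ Hu) as (L & ? & ?)]; exists L; auto.
  - destruct Hu as (u1 & u2 & Hu1 & Hu2 & ->).
    destruct (IHe _ Hu1) as (L1 & H1 & H1'), (IHe' _ Hu2) as (L2 & H2 & H2').
    exists (rmul L1 L2). split; [exists L1, L2 | exists u1, u2]; auto.
  - destruct Hu as (s & Hs & ->). induction Hs as [|u s Hu Hs IH]; simpl.
    + exists rone. split; [exists nil; split; [constructor | reflexivity] | reflexivity].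
    + destruct (IHe _ Hu) as (L & HL & HLu), IH as (Ls & (l & Hl & ->) & HLs).
      exists (rmul L (fold_right rmul rone l)).
      split; [exists (L :: l) | exists u, (fold_right (@app delta) nil s)]; auto.
Qed.

Lemma rsem_word_langs_elim e L : rsem rmul rone (rmap word_lang e) L ->
  exists u0, rsem (@app delta) nil e u0 /\ forall u, proj1_sig L u -> u = u0.
Proof.
  revert L; induction e as [| | w | e IHe e' IHe' | e IHe e' IHe' | e IHe]; simpl; intros L HL.
  - destruct HL.
  - subst. now exists nil.
  - subst. now exists w.
  - destruct HL as [HL | HL];
      [destruct (IHe _ HL) as (u & ? & ?) | destruct (IHe' _ HL) as (u & ? & ?)]; exists u; auto.
  - destruct HL as (L1 & L2 & H1 & H2 & ->).
    destruct (IHe _ H1) as (u1 & Hu1 & H1'), (IHe' _ H2) as (u2 & Hu2 & H2').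
    exists (u1 ++ u2). split; [exists u1, u2; auto |].
    intros u (v1 & v2 & Hv1 & Hv2 & ->). now rewrite (H1' _ Hv1), (H2' _ Hv2).
  - destruct HL as (s & Hs & ->). induction Hs as [|L s HL Hs IH]; simpl.
    + exists nil. split; [exists nil |]; auto.
    + destruct (IHe _ HL) as (u & Hu & HLu), IH as (us & (l & Hl & ->) & Hus).
      exists (u ++ fold_right (@app delta) nil l). split; [exists (u :: l); auto |].
      intros v (v1 & v2 & Hv1 & Hv2 & ->). now rewrite (HLu _ Hv1), (Hus _ Hv2).
Qed.

Lemma is_union_word_langs (L : RegLang) e :
  (forall w, proj1_sig L w <-> rsem (@app delta) nil e w) -> is_union (rmap word_lang e) L.
Proof.
  intros He w. rewrite He. split; [apply rsem_word_langs_intro |].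
  intros (L' & HL' & Hw). destruct (rsem_word_langs_elim _ _ HL') as (u0 & Hu0 & Hu).
  now rewrite (Hu _ Hw).
Qed.

Section C2Morph.
Context {T : rdioid} (g : RegLang -> T) (Hg : c2morph g).

Lemma c2morph_union A s : is_union A s -> g s = dsup (rmap g A).
Proof. apply Hg. Qed.

Lemma c2morph_ext (L L' : RegLang) : (forall w, proj1_sig L w <-> proj1_sig L' w) -> g L = g L'.
Proof.
  intros HLL'. rewrite (c2morph_union (RAtom L) L').
  - cbn [rmap]. now rewrite dsup_atom.
  - intros w. rewrite <- HLL'. split; [now exists L | now intros (? & -> & ?)].
Qed.

Lemma c2morph_word_nil : g (word_lang nil) = done.
Proof. rewrite <- (proj1 (proj2 (proj2 Hg))). now apply c2morph_ext. Qed.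

Lemma c2morph_word_cons a w : g (word_lang (a :: w)) = g (rsing a) ⊗ g (word_lang w).
Proof.
  rewrite <- (proj1 (proj2 (proj2 (proj2 (proj2 Hg))))). apply c2morph_ext. intros u; simpl.
  split; [intros -> ; now exists [a], w | now intros (? & ? & -> & -> & ->)].
Qed.

End C2Morph.

Lemma representable_g {K T : rdioid} (iota : K -> T) (g : RegLang -> T) :
  rmorph iota -> c2morph g -> forall L, representable iota g (g L).
Proof.
  intros Hiota Hg L.
  assert (Hword : forall w, representable iota g (g (word_lang w))).
  { induction w as [|a w IH].
    - rewrite c2morph_word_nil by exact Hg. now apply representable1.
    - rewrite c2morph_word_cons by exact Hg.
      apply representable_mul; [exact Hiota | apply representable_letter, Hiota | exact IH]. }
  destruct (proj2_sig L) as [e He].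
  rewrite (c2morph_union _ Hg _ _ (is_union_word_langs L e He)), rmap_comp.
  apply representable_dsup; [exact Hiota |]. now apply ratom_all_rmap.
Qed.

Theorem theorem5 (K T : rdioid) (iota : K -> T) (g : RegLang -> T) :
  is_tensor_C2 iota g ->
  forall phi : T,
  exists (n : nat) (S F : nat -> bool) (U : nat -> nat -> ent_bp)
         (V : nat -> nat -> ent_dq) (X : nat -> nat -> K),
    phi = row_mat_col n (fun i => bool_el (S i))
            (mstar n (fun i j => dadd (dadd (bp_el g (U i j)) (iota (X i j)))
                                      (dq_el g (V i j))))
            (fun j => bool_el (F j)).
Proof.
  intros Htensor phi.
  pose proof Htensor as [[Hiota [Hg _]] _].
  destruct (tensor_C2_ind _ _ Htensor (representable iota g) (representable_dsup _ _ Hiota)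
              (representable_iota _ _ Hiota) (representable_g _ _ Hiota Hg) phi)
    as (n & S & F & U & V & X & Hphi).
  exists n, S, F, U, V, X. now rewrite row_mat_col_star_col.
Qed.
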